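(* Let $k\ge2$, $0<a<1$, $d\ge2$, and let $\{\eta_n\}_{n\ge0}\subset\mathbb{C}\setminus\{0\}$ satisfy $|\eta_n|\le a^{d^n}$ for all $n$. Let \[ F_n(z_1,\dots,z_k)=(\eta_n z_k,\ z_2^d+\eta_n z_1,\ \dots,\ z_k^d+\eta_n z_{k-1}). \] Let $R>1+a$, and for $1\le i\le k$ let $V_i=\{z\in\mathbb{C}^k:\|z\|_\infty=|z_i|\ge R\}$, and put $V^+=\bigcup_{i=2}^kV_i$. Then $F_n(V^+)\subset V^+$ for every $n\ge1$.
   Context: $\|z\|_\infty=\max_{1\le i\le k}|z_i|$. *)

From HB Require Import structures.
From mathcomp Require Import all_boot all_order all_algebra.
From mathcomp Require Import reals.
From mathcomp Require Import complex.
Set Implicit Arguments. Unset Strict Implicit. Unset Printing Implicit Defensive.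
Import Order.TTheory GRing.Theory Num.Theory.
Local Open Scope ring_scope.

(* Points of C^k are row vectors z : 'rV[R[i]]_k; the paper's coordinate
   z_j (1 <= j <= k) is z 0 (j-1) (0-based index). |w| is normc w : R. *)

Definition cabs (R : rcfType) (w : R[i]) : R := ComplexField.Normc.normc w.

Definition supn (R : realType) (k : nat) (z : 'rV[R[i]]_k) : R :=
  \big[Num.max/0]_(i < k) cabs (z 0 i).

Definition inV (R : realType) (k : nat) (Rr : R) (i : 'I_k) (z : 'rV[R[i]]_k) : Prop :=
  supn z = cabs (z 0 i) /\ Rr <= cabs (z 0 i).

(* V^+ = union of V_i for i = 2..k (1-based), i.e. 0-based i >= 1 *)
Definition inVplus (R : realType) (k : nat) (Rr : R) (z : 'rV[R[i]]_k) : Prop :=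
  exists i : 'I_k, (1 <= i)%N /\ inV Rr i z.

(* F_eta(z) = (eta z_k, z_2^d + eta z_1, ..., z_k^d + eta z_{k-1});
   ord_pred is the cyclic predecessor: 0 |-> k-1, i |-> i-1. *)
Definition Fmap (R : realType) (k d : nat) (eta : R[i]) (z : 'rV[R[i]]_k) : 'rV[R[i]]_k :=
  \row_(i < k) ((if val i == 0%N then 0 else z 0 i ^+ d) + eta * z 0 (ord_pred i)).

(* For z in V_i with i >= 2 and M := ||z|| = |z_i| >= R > 1 + a, the i-th
   coordinate of F_n z has modulus at least M^d - |eta_n| M >= M^2 - a M >= M,
   while the first one has modulus at most |eta_n| M <= a M < M.  So the sup
   norm of F_n z is at least R and is not attained at the first coordinate. *)

From HB Require Import structures.
From mathcomp Require Import all_boot all_order all_algebra.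
From mathcomp Require Import reals.
From mathcomp Require Import complex.
From mathcomp Require Import lra.
Set Implicit Arguments. Unset Strict Implicit. Unset Printing Implicit Defensive.
Import Order.TTheory GRing.Theory Num.Theory.
Local Open Scope ring_scope.

Section Modulus.
Variable R : rcfType.
Implicit Types x y : R[i].

Lemma cabs_ge0 x : 0 <= cabs x.
Proof. by case: x => a b; rewrite /cabs /= sqrtr_ge0. Qed.

Lemma cabsM x y : cabs (x * y) = cabs x * cabs y.
Proof. exact: ComplexField.Normc.normcM. Qed.

Lemma cabsX x n : cabs (x ^+ n) = cabs x ^+ n.
Proof.
elim: n => [|n IHn]; first by rewrite /cabs ComplexField.Normc.normc1.
by rewrite !exprS cabsM IHn.
Qed.

Lemma cabs_subr_le x y : cabs x - cabs y <= cabs (x + y).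
Proof.
have := le_normcD (x + y) (- y).
by rewrite addrK normcN -/(cabs _) -/(cabs _) -/(cabs _) lerBlDr.
Qed.

End Modulus.

Section SupNorm.
Variables (R : realType) (k : nat).
Implicit Types z w : 'rV[R[i]]_k.

Lemma le_supn z j : cabs (z 0 j) <= supn z.
Proof. by rewrite /supn (bigD1 j) //= le_max lexx. Qed.

Lemma supn_attained z : (0 < k)%N -> exists j, supn z = cabs (z 0 j).
Proof.
move=> k_gt0.
have [z0|//] : supn z = 0 \/ exists j, supn z = cabs (z 0 j).
  rewrite /supn; apply: (big_rec (fun x => x = 0 \/ exists j, x = cabs (z 0 j))).
    by left.
  move=> j x _ [->|[j' ->]].
    by have [_|_] := leP (cabs (z 0 j)) 0; [left | right; exists j].
  by have [_|_] := leP (cabs (z 0 j)) (cabs (z 0 j')); right; [exists j' | exists j].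
exists (Ordinal k_gt0); apply/eqP.
by rewrite z0 eq_le cabs_ge0 -z0 le_supn.
Qed.

Lemma inVplus_supn (Rr : R) w : (0 < k)%N -> Rr <= supn w ->
  (forall j : 'I_k, val j = 0%N -> cabs (w 0 j) < supn w) -> inVplus Rr w.
Proof.
move=> k_gt0 Rr_le w0_lt; have [j wj] := supn_attained w k_gt0.
exists j; split; last by split; rewrite -?wj.
by rewrite lt0n; apply/eqP => /w0_lt; rewrite wj ltxx.
Qed.

End SupNorm.

Section OneStep.
Variables (R : realType) (k d : nat) (eta : R[i]).
Implicit Types z : 'rV[R[i]]_k.

Lemma Fmap_first_le z (j : 'I_k) : val j = 0%N ->
  cabs (Fmap d eta z 0 j) <= cabs eta * supn z.
Proof.
move=> j0; rewrite mxE j0 eqxx add0r cabsM.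
by rewrite ler_wpM2l ?cabs_ge0 ?le_supn.
Qed.

Lemma Fmap_other_ge z (j : 'I_k) : val j != 0%N ->
  cabs (z 0 j) ^+ d - cabs eta * supn z <= cabs (Fmap d eta z 0 j).
Proof.
move=> /negbTE j_neq0; rewrite mxE j_neq0 /=.
apply: le_trans (cabs_subr_le _ _); rewrite cabsX cabsM lerB //.
by rewrite ler_wpM2l ?cabs_ge0 ?le_supn.
Qed.

End OneStep.

Lemma exprn_subM_ge_self (R : realFieldType) (d : nat) (a e M : R) :
  (2 <= d)%N -> 0 <= e <= a -> 1 + a <= M -> M <= M ^+ d - e * M.
Proof.
move=> d_ge2 /andP[e_ge0 e_le_a] M_ge.
have M_ge1 : 1 <= M by lra.
have M2_le : M ^+ 2 <= M ^+ d by exact: ler_weXn2l.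
have : 0 <= M * (M - 1 - a) by apply: mulr_ge0; lra.
have : e * M <= a * M by rewrite ler_wpM2r //; lra.
rewrite expr2 in M2_le; nra.
Qed.

Lemma exprn_ile_self (R : realFieldType) (a : R) (m : nat) :
  0 <= a <= 1 -> (0 < m)%N -> a ^+ m <= a.
Proof. by move=> /andP[a_ge0 a_le1] m_gt0; rewrite -[leRHS]expr1 ler_wiXn2l. Qed.

Theorem lemma3p4 (R : realType) (k d : nat) (a Rr : R) (eta : nat -> R[i])
  (hk : (2 <= k)%N) (ha0 : 0 < a) (ha1 : a < 1) (hd : (2 <= d)%N)
  (heta0 : forall n, eta n != 0)
  (heta : forall n, cabs (eta n) <= a ^+ (d ^ n))
  (hR : 1 + a < Rr) :
  forall n : nat, (1 <= n)%N ->
  forall z : 'rV[R[i]]_k, inVplus Rr z -> inVplus Rr (Fmap d (eta n) z).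
Proof.
move=> n _ z [i [i_ge1 [zi_sup Rr_le]]].
rewrite -zi_sup in Rr_le.
have M_gt0 : 0 < supn z by lra.
have eta_le_a : cabs (eta n) <= a.
  apply: le_trans (heta n) (exprn_ile_self _ _); last by rewrite expn_gt0 (leq_trans _ hd).
  by rewrite !ltW.
have M_le_wi : supn z <= cabs (Fmap d (eta n) z 0 i).
  have i_neq0 : val i != 0%N by rewrite -lt0n.
  apply: le_trans (Fmap_other_ge d (eta n) z i_neq0).
  rewrite -zi_sup; apply: (exprn_subM_ge_self (a := a)) => //; last by lra.
  by rewrite cabs_ge0 eta_le_a.
apply: inVplus_supn; first exact: leq_trans hk.
  by apply: le_trans (le_supn _ i); lra.
move=> j j0; apply: le_lt_trans (Fmap_first_le d (eta n) z j0) _.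
apply: lt_le_trans (le_supn _ i); apply: lt_le_trans M_le_wi.
by rewrite -[ltRHS]mul1r ltr_pM2r //; apply: le_lt_trans eta_le_a ha1.
Qed.
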